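(* Let $p=[p_1,\dots,p_m]^T\in A^m$, $A=\mathbb C[t_1,\dots,t_n]$. For each $i$ let $d_{ij}$ be the degree of $p_i$ in $t_j$ and $\mathcal E_{p_i}=\{\alpha\in\mathbb N_0^n:\alpha_j\le d_{ij}+1\text{ for }1\le j\le n\}=\{\alpha_{i1},\dots,\alpha_{il_i}\}$. Let $\mathrm{Der}_p$ be the tuple $(p_1,\partial^{\alpha_{11}}\bullet p_1,\dots,\partial^{\alpha_{1l_1}}\bullet p_1,\dots,p_m,\partial^{\alpha_{m1}}\bullet p_m,\dots,\partial^{\alpha_{ml_m}}\bullet p_m)$ of length $L=\sum_i(l_i+1)$, let $\mathrm{Syz}(\mathrm{Der}_p)=\{q\in A^{1\times L}:\sum_k q_k(\mathrm{Der}_p)_k=0\}$, let $M\in\mathcal W_n^{L\times m}$ be the matrix with rows $e_1,\partial^{\alpha_{11}}e_1,\dots,\partial^{\alpha_{1l_1}}e_1,\dots,e_m,\partial^{\alpha_{m1}}e_m,\dots,\partial^{\alpha_{ml_m}}e_m$, and let $\Phi_p:\mathrm{Syz}(\mathrm{Der}_p)\to\mathcal W_n^{1\times m}$, $q\mapsto q\cdot M$. Then $\Phi_p$ takes values in $\ker(\kappa_p)$ and the left $\mathcal W_n$-submodule generated by the image of $\Phi_p$ equals $\ker(\kappa_p)$.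
   Context: $\mathcal W_n$ is the $n$-th Weyl algebra $\mathbb C[t_1,\dots,t_n]\langle\partial_1,\dots,\partial_n\rangle$ with relations $\partial_it_j=t_j\partial_i+\delta_{ij}$, $t_it_j=t_jt_i$, $\partial_i\partial_j=\partial_j\partial_i$; it acts on $A=\mathbb C[t_1,\dots,t_n]$ by $\partial_i\bullet p=\partial p/\partial t_i$ and multiplication by $t_i$. Multi-index notation $\partial^\alpha=\partial_1^{\alpha_1}\cdots\partial_n^{\alpha_n}$. $e_i$ are the canonical basis vectors of $\mathcal W_n^{1\times m}$. For $p\in A^m$, $\ker(\kappa_p)=\{a\in\mathcal W_n^{1\times m}:\sum_ia_i\bullet p_i=0\}$. *)

From HB Require Import structures.
From mathcomp Require Import all_boot all_order all_algebra.
Set Implicit Arguments. Unset Strict Implicit. Unset Printing Implicit Defensive.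
Import Order.TTheory GRing.Theory Num.Theory.
Local Open Scope ring_scope.

Section Weyl.
Variables (F : numClosedFieldType) (n : nat).

Definition mon := {ffun 'I_n -> nat}.
Definition mon0 : mon := [ffun _ => 0%N].
Definition monD (a b : mon) : mon := [ffun j => (a j + b j)%N].
Definition monB (a b : mon) : mon := [ffun j => (a j - b j)%N].

(* A polynomial of A is a formal finite sum  sum c t^alpha  given as a list
   of (c, alpha); its coefficient of t^alpha is [pcoef]. *)
Definition Apoly := seq (F * mon).
Definition pcoef (p : Apoly) (a : mon) : F := \sum_(x <- p | x.2 == a) x.1.
Definition peq (p q : Apoly) : Prop := forall a, pcoef p a = pcoef q a.

(* An element of W_n in normal (PBW) form  sum c t^alpha d^beta, given as a
   list of (c, alpha, beta); its coefficient is [wcoef]. *)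
Definition weyl := seq (F * mon * mon).
Definition wcoef (w : weyl) (a b : mon) : F :=
  \sum_(x <- w | (x.1.2 == a) && (x.2 == b)) x.1.1.
Definition weq (w1 w2 : weyl) : Prop := forall a b, wcoef w1 a b = wcoef w2 a b.

Definition pmul (p q : Apoly) : Apoly :=
  [seq (x.1 * y.1, monD x.2 y.2) | x <- p, y <- q].

Definition polyW (p : Apoly) : weyl := [seq (x.1, x.2, mon0) | x <- p].
Definition dmon (a : mon) : weyl := [:: (1, mon0, a)].

(* action (bullet) of W_n on A:  t^a d^b . t^g = (prod_j g_j^(falling b_j)) t^(a+g-b) *)
Definition mact (x : F * mon * mon) (y : F * mon) : F * mon :=
  (x.1.1 * y.1 * (\prod_(j < n) (y.2 j ^_ x.2 j))%N%:R, monD x.1.2 (monB y.2 x.2)).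
Definition wact (w : weyl) (p : Apoly) : Apoly := [seq mact x y | x <- w, y <- p].

(* product in W_n, from the relations d_i t_j = t_j d_i + delta_ij:
   (t^a d^b)(t^g d^e) = sum_k prod_j C(b_j,k_j) g_j^(falling k_j) t^(a+g-k) d^(b-k+e) *)
Definition kk B (k : {ffun 'I_n -> 'I_B}) : mon := [ffun j => nat_of_ord (k j)].
Definition mmul (x y : F * mon * mon) : weyl :=
  let B := (\max_(j < n) x.2 j).+1 in
  [seq (x.1.1 * y.1.1 *
          (\prod_(j < n) ('C(x.2 j, k j) * (y.1.2 j ^_ k j)))%N%:R,
        monD x.1.2 (monB y.1.2 (kk k)), monD (monB x.2 (kk k)) y.2)
  | k : {ffun 'I_n -> 'I_B} <- enum {: {ffun 'I_n -> 'I_B}}].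
Definition wmul (w1 w2 : weyl) : weyl := flatten [seq mmul x y | x <- w1, y <- w2].

(* sizej p j = d_j + 1 where d_j is the degree of p in t_j (0 for p = 0) *)
Definition sizej (p : Apoly) (j : 'I_n) : nat :=
  (\max_(x <- p | pcoef p x.2 != 0%R) (x.2 j).+1)%N.

Definition Eset (p : Apoly) : seq mon :=
  let S := (\max_(j < n) sizej p j)%N in
  [seq kk k | k : {ffun 'I_n -> 'I_S.+1} <- enum {: {ffun 'I_n -> 'I_S.+1}}
            & [forall j, (k j <= sizej p j)%N]].

Section Vec.
Variables (m : nat) (p : 'I_m -> Apoly).

(* index list: entry (i, alpha) stands for d^alpha . p_i in Der_p and for the
   row d^alpha e_i of M; the leading (i, 0) of each block stands for p_i / e_i *)
Definition Didx : seq ('I_m * mon) :=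
  flatten [seq (i, mon0) :: [seq (i, a) | a <- Eset (p i)] | i <- enum 'I_m].
Definition Lp : nat := size Didx.
Definition didx (k : 'I_Lp) : 'I_m * mon := tnth (in_tuple Didx) k.

Definition Der (k : 'I_Lp) : Apoly := wact (dmon (didx k).2) (p (didx k).1).
Definition Mentry (k : 'I_Lp) (i : 'I_m) : weyl :=
  if (didx k).1 == i then dmon (didx k).2 else [::].

Definition Syz (q : 'I_Lp -> Apoly) : Prop :=
  forall a, pcoef (flatten [seq pmul (q k) (Der k) | k <- enum 'I_Lp]) a = 0.

Definition Phi (q : 'I_Lp -> Apoly) : 'I_m -> weyl :=
  fun i => flatten [seq wmul (polyW (q k)) (Mentry k i) | k <- enum 'I_Lp].

Definition kappa (a : 'I_m -> weyl) : Apoly :=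
  flatten [seq wact (a i) (p i) | i <- enum 'I_m].
Definition in_ker (a : 'I_m -> weyl) : Prop := forall b, pcoef (kappa a) b = 0.

Definition in_gen_image (a : 'I_m -> weyl) : Prop :=
  exists (r : nat) (w : 'I_r -> weyl) (qs : 'I_r -> 'I_Lp -> Apoly),
    (forall j, Syz (qs j)) /\
    (forall i, weq (a i) (flatten [seq wmul (w j) (Phi (qs j) i) | j <- enum 'I_r])).

End Vec.
End Weyl.

Arguments Didx {F n m} p.
Arguments Lp {F n m} p.
Arguments didx {F n m} p k.
Arguments Der {F n m} p k.
Arguments Mentry {F n m} p k i.
Arguments Syz {F n m} p q.
Arguments Phi {F n m} p q i.
Arguments kappa {F n m} p a.
Arguments in_ker {F n m} p a.
Arguments in_gen_image {F n m} p a.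

From HB Require Import structures.
From mathcomp Require Import all_boot all_order all_algebra ring zify.
Set Implicit Arguments. Unset Strict Implicit. Unset Printing Implicit Defensive.
Import Order.TTheory GRing.Theory Num.Theory.
Local Open Scope ring_scope.

(* All identities are proved after pairing formal sums with arbitrary
   functions of the exponents.  The action t^a d^b . t^g = g^_b t^(a + g - b)
   (falling factorials) is compatible with the Leibniz product of W_n by
   Vandermonde's identity for falling factorials, so (w1 w2) . f = w1 . (w2 . f).
   Hence (q M) . p = sum_k q_k Der_p,k, so Phi_p maps syzygies into ker kappa_p,
   and by associativity so does the left submodule they generate.
   Conversely, split a in ker kappa_p into terms c t^a d^b e_i.  If b_j > deg_j p_i
   for some j, then g = (deg_j p_i + 1) e_j lies in E_p_i, g <= b and d^g kills
   p_i, so the term is c t^a d^(b - g) Phi_p(e_(i,g)) with e_(i,g) a syzygy.  The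
   other terms have b in E_p_i and add up to Phi_p(q0), where q0 collects their
   coefficients at the positions (i, b); q0 is a syzygy because these terms alone
   already lie in ker kappa_p. *)

Lemma ffactnD (x a b : nat) : (x ^_ (a + b) = x ^_ a * (x - a) ^_ b)%N.
Proof.
elim: b => [|b IH]; first by rewrite addn0 ffactn0 muln1.
by rewrite addnS !ffactnSr IH subnDA mulnA.
Qed.

Lemma ffact_Vandermonde (g w b : nat) :
  (\sum_(t < b.+1) 'C(b, t) * g ^_ t * w ^_ (b - t) = (g + w) ^_ b)%N.
Proof.
rewrite -bin_ffact -binomial.Vandermonde big_distrl /=.
apply: eq_bigr => [[t /= lt_tb]] _.
by rewrite -!bin_ffact -(@bin_fact b t) //; ring.
Qed.

Lemma sum_bin_ffact_shift (B b e g z : nat) : (b < B)%N ->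
  (\sum_(t < B) 'C(b, t) * g ^_ t * z ^_ (b - t + e) =
   z ^_ e * (g + (z - e)) ^_ b)%N.
Proof.
move=> lt_bB; rewrite -ffact_Vandermonde big_distrr /=.
rewrite (big_ord_widen _ (fun t => z ^_ e * ('C(b, t) * g ^_ t * (z - e) ^_ (b - t)))%N lt_bB).
rewrite [RHS]big_mkcond /=; apply: eq_bigr => t _.
case: ltnP => [_|lt_bt]; first by rewrite addnC ffactnD; ring.
by rewrite bin_small.
Qed.

Lemma sum_ffun_prod_bin_ffact (n B : nat) (b c g e : 'I_n -> nat) :
  (forall j, b j < B)%N ->
  (\sum_(k : {ffun 'I_n -> 'I_B})
      \prod_(j < n) ('C(b j, k j) * c j ^_ k j * g j ^_ (b j - k j + e j)) =
   \prod_(j < n) (g j ^_ e j * (c j + (g j - e j)) ^_ b j))%N.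
Proof.
move=> lt_bB.
rewrite -(bigA_distr_bigA
  (fun j (t : 'I_B) => 'C(b j, t) * c j ^_ t * g j ^_ (b j - t + e j))%N).
by apply: eq_bigr => j _; apply: sum_bin_ffact_shift.
Qed.

Section Pairing.
Variables (F : numClosedFieldType) (n : nat).
Local Notation mon := (mon n).
Local Notation Apoly := (Apoly F n).
Local Notation weyl := (weyl F n).

Definition ppair (p : Apoly) (G : mon -> F) := \sum_(y <- p) y.1 * G y.2.
Definition wpair (w : weyl) (G : mon -> mon -> F) := \sum_(x <- w) x.1.1 * G x.1.2 x.2.

Lemma sum_group_by_key (X : Type) (T : eqType) (s : seq X) (key : X -> T)
    (c : X -> F) (G : T -> F) (S : seq T) :
  uniq S -> {subset map key s <= S} ->
  \sum_(x <- s) c x * G (key x) = \sum_(g <- S) (\sum_(x <- s | key x == g) c x) * G g.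
Proof.
move=> uS sub.
under [RHS]eq_bigr => g _ do rewrite big_distrl /= big_mkcond /=.
rewrite exchange_big /=.
elim: s sub => [|x s IH] sub; first by rewrite !big_nil.
rewrite !big_cons IH; last by move=> g gi; apply: sub; rewrite inE gi orbT.
congr (_ + _); rewrite -big_mkcond /=.
rewrite (eq_bigr (fun _ => c x * G (key x))); last by move=> g /eqP <-.
rewrite big_const_seq (@eq_count _ _ (pred1 (key x))); last by move=> g /=; rewrite eq_sym.
have key_x_S : key x \in S by apply: sub; rewrite inE eqxx.
by rewrite count_uniq_mem // key_x_S /= addr0.
Qed.

Lemma eq_ppair p G1 G2 : G1 =1 G2 -> ppair p G1 = ppair p G2.
Proof. by move=> eG; apply: eq_bigr => y _; rewrite eG. Qed.

Lemma wpair_weq w1 w2 G : weq w1 w2 -> wpair w1 G = wpair w2 G.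
Proof.
move=> e12; pose key (x : F * mon * mon) := (x.1.2, x.2).
have uS := undup_uniq (map key (w1 ++ w2)).
rewrite /wpair (@sum_group_by_key _ _ w1 key _ (fun g => G g.1 g.2) _ uS); last first.
  by move=> g gi; rewrite mem_undup map_cat mem_cat gi.
rewrite (@sum_group_by_key _ _ w2 key _ (fun g => G g.1 g.2) _ uS); last first.
  by move=> g gi; rewrite mem_undup map_cat mem_cat gi orbT.
by apply: eq_bigr => [[a b]] _; congr (_ * _); apply: e12.
Qed.

Lemma ppair_eq0 p G : (forall a, pcoef p a != 0 -> G a = 0) -> ppair p G = 0.
Proof.
move=> G0; rewrite /ppair (@sum_group_by_key _ _ p snd fst G _ (undup_uniq (map snd p))).
  rewrite big1 // => g _; have := G0 g; rewrite /pcoef.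
  by case: eqP => [-> _|_ ->]; rewrite ?mul0r ?mulr0.
by move=> g; rewrite mem_undup.
Qed.

Lemma pcoefE p a : pcoef p a = ppair p (fun g => (g == a)%:R).
Proof.
by rewrite /pcoef big_mkcond; apply: eq_bigr => y _; case: eqP; rewrite ?mulr1 ?mulr0.
Qed.

Lemma wcoefE w a b : wcoef w a b = wpair w (fun a' b' => ((a' == a) && (b' == b))%:R).
Proof.
by rewrite /wcoef big_mkcond; apply: eq_bigr => y _; case: andP; rewrite ?mulr1 ?mulr0.
Qed.

Lemma weq_wpair w1 w2 : (forall G, wpair w1 G = wpair w2 G) -> weq w1 w2.
Proof. by move=> e12 a b; rewrite !wcoefE. Qed.

Lemma ppair_flatten (L : seq Apoly) G : ppair (flatten L) G = \sum_(l <- L) ppair l G.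
Proof.
elim: L => [|l L IH]; first by rewrite big_nil /ppair big_nil.
by rewrite big_cons -IH /ppair big_cat.
Qed.

Lemma ppair_flatten_map (I : Type) (s : seq I) (f : I -> Apoly) G :
  ppair (flatten [seq f i | i <- s]) G = \sum_(i <- s) ppair (f i) G.
Proof. by rewrite ppair_flatten big_map. Qed.

Lemma wpair_flatten (L : seq weyl) G : wpair (flatten L) G = \sum_(l <- L) wpair l G.
Proof.
elim: L => [|l L IH]; first by rewrite big_nil /wpair big_nil.
by rewrite big_cons -IH /wpair big_cat.
Qed.

Lemma wpair_flatten_map (I : Type) (s : seq I) (f : I -> weyl) G :
  wpair (flatten [seq f i | i <- s]) G = \sum_(i <- s) wpair (f i) G.
Proof. by rewrite wpair_flatten big_map. Qed.

Lemma ppair_sumr (I : Type) (s : seq I) p (f : I -> mon -> F) :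
  ppair p (fun g => \sum_(i <- s) f i g) = \sum_(i <- s) ppair p (f i).
Proof. by rewrite /ppair; under eq_bigr => y _ do rewrite big_distrr; rewrite exchange_big. Qed.

Lemma wpair_sumr (I : Type) (s : seq I) w (f : I -> mon -> mon -> F) :
  wpair w (fun a b => \sum_(i <- s) f i a b) = \sum_(i <- s) wpair w (f i).
Proof. by rewrite /wpair; under eq_bigr => x _ do rewrite big_distrr; rewrite exchange_big. Qed.

Lemma wpair_ppair w p K :
  wpair w (fun a b => ppair p (K a b)) = ppair p (fun g => wpair w (fun a b => K a b g)).
Proof.
rewrite /wpair /ppair; under eq_bigr => x _ do rewrite big_distrr /=.
rewrite exchange_big /=; apply: eq_bigr => y _.
by rewrite big_distrr /=; apply: eq_bigr => x _; rewrite mulrCA.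
Qed.

Lemma wpair_filterC w (P : pred (F * mon * mon)) G :
  wpair [seq x <- w | P x] G + wpair [seq x <- w | ~~ P x] G = wpair w G.
Proof. by rewrite /wpair !big_filter [RHS](bigID P). Qed.

Definition dcoef (b g : mon) : F := (\prod_(j < n) g j ^_ b j)%N%:R.

Lemma ppair_wact w p G :
  ppair (wact w p) G =
  wpair w (fun a b => ppair p (fun g => dcoef b g * G (monD a (monB g b)))).
Proof.
rewrite /ppair /wpair /wact big_allpairs_dep; apply: eq_bigr => x _.
by rewrite big_distrr; apply: eq_bigr => y _; rewrite /= /dcoef !mulrA.
Qed.

Lemma mon0D (z : mon) : monD (mon0 n) z = z.
Proof. by apply/ffunP => j; rewrite !ffunE. Qed.

Lemma monD0 (z : mon) : monD z (mon0 n) = z.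
Proof. by apply/ffunP => j; rewrite !ffunE addn0. Qed.

Lemma monBK (b c : mon) : (forall j, c j <= b j)%N -> monD (monB b c) c = b.
Proof. by move=> le_cb; apply/ffunP => j; rewrite !ffunE subnK. Qed.

Lemma ppair_dmon b p G :
  ppair (wact (dmon F b) p) G = ppair p (fun g => dcoef b g * G (monB g b)).
Proof.
rewrite ppair_wact /wpair big_seq1 mul1r.
by apply: eq_ppair => g; rewrite mon0D.
Qed.

Lemma ppair_pmul p q G :
  ppair (pmul p q) G = ppair p (fun a => ppair q (fun g => G (monD a g))).
Proof.
rewrite /ppair /pmul big_allpairs_dep; apply: eq_bigr => x _.
by rewrite big_distrr; apply: eq_bigr => y _; rewrite /= mulrA.
Qed.

Lemma wpair_wmul w1 w2 G :
  wpair (wmul w1 w2) G = \sum_(x1 <- w1) \sum_(x2 <- w2) wpair (mmul x1 x2) G.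
Proof.
by rewrite wpair_flatten big_allpairs_dep.
Qed.

Lemma wpair_mmul_scaler x c a b G :
  wpair (mmul x (c, a, b)) G = c * wpair (mmul x (1, a, b)) G.
Proof.
rewrite /wpair /mmul !big_map big_distrr /=; apply: eq_bigr => k _.
by rewrite mulr1 !mulrA [x.1.1 * c]mulrC.
Qed.

Lemma wpair_wmul_weqr w1 w2 w2' G :
  weq w2 w2' -> wpair (wmul w1 w2) G = wpair (wmul w1 w2') G.
Proof.
move=> e2; rewrite !wpair_wmul; apply: eq_bigr => x1 _.
transitivity (wpair w2 (fun a b => wpair (mmul x1 (1, a, b)) G)).
  by apply: eq_bigr => [[[c a] b]] _; apply: wpair_mmul_scaler.
rewrite (wpair_weq _ e2); apply: eq_bigr => [[[c a] b]] _.
by rewrite wpair_mmul_scaler.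
Qed.

Lemma eq_wpair w G1 G2 : G1 =2 G2 -> wpair w G1 = wpair w G2.
Proof. by move=> eG; apply: eq_bigr => x _; rewrite eG. Qed.

Lemma wpair_mmul_nocross x y G : x.2 = mon0 n \/ y.1.2 = mon0 n ->
  wpair (mmul x y) G = x.1.1 * y.1.1 * G (monD x.1.2 y.1.2) (monD x.2 y.2).
Proof.
move=> nocross; rewrite /wpair /mmul big_map big_enum /=.
set B := (\max_(j < n) x.2 j).+1.
have monB_k0 (z : mon) : monB z (kk [ffun=> (ord0 : 'I_B)]) = z.
  by apply/ffunP => j; rewrite !ffunE subn0.
rewrite (bigD1 [ffun _ => ord0]) //= [X in _ + X]big1 ?addr0.
  by rewrite big1 ?mulr1n ?mulr1 ?monB_k0 // => j _; rewrite ffunE bin0 ffactn0.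
move=> k /eqP k_neq0; have [j kj_neq0] : exists j, k j != ord0.
  apply/existsP; rewrite -negb_forall; apply/negP => /forallP k0.
  by apply: k_neq0; apply/ffunP => j; rewrite ffunE; apply/eqP.
have kj_eq0F : (nat_of_ord (k j) == 0%N) = false := negbTE kj_neq0.
rewrite (bigD1 j) //=; case: nocross => ->; rewrite ffunE.
  by rewrite bin0n kj_eq0F mulr0 mul0r.
by rewrite ffact_small ?lt0n ?kj_eq0F // muln0 mul0n mulr0 mul0r.
Qed.

Lemma wpair_wmul1l w G : wpair (wmul [:: (1, mon0 n, mon0 n)] w) G = wpair w G.
Proof.
rewrite wpair_wmul big_seq1; apply: eq_bigr => x _.
by rewrite wpair_mmul_nocross /=; [rewrite mul1r !mon0D | left].
Qed.

(* Acting with the Leibniz expansion of (t^a d^b)(t^c d^e) on t^g, the term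
   indexed by k carries prod_j C(b_j, k_j) c_j^_k_j g_j^_(b_j - k_j + e_j); it
   vanishes unless no exponent truncates, and then it lands on the monomial of
   t^a d^b . (t^c d^e . t^g).  Summing over k is Vandermonde's identity. *)
Lemma wpair_mmul_act x1 x2 g G :
  wpair (mmul x1 x2) (fun a b => dcoef b g * G (monD a (monB g b))) =
  x1.1.1 * x2.1.1 * (dcoef x2.2 g * dcoef x1.2 (monD x2.1.2 (monB g x2.2))) *
  G (monD x1.1.2 (monB (monD x2.1.2 (monB g x2.2)) x1.2)).
Proof.
case: x1 => [[c1 a] b]; case: x2 => [[c2 c] e] /=.
rewrite /wpair /mmul big_map big_enum /=.
set B := (\max_(j < n) b j).+1.
have lt_bB j : (b j < B)%N by rewrite ltnS (leq_bigmax j).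
set E := monD a (monB (monD c (monB g e)) b).
pose T (k : {ffun 'I_n -> 'I_B}) :=
  (\prod_(j < n) ('C(b j, k j) * c j ^_ k j * g j ^_ (b j - k j + e j)))%N.
transitivity (c1 * c2 * (\sum_(k : {ffun 'I_n -> 'I_B}) (T k)%:R) * G E).
  rewrite big_distrr big_distrl /=; apply: eq_bigr => k _.
  have -> : dcoef (monD (monB b (kk k)) e) g =
            (\prod_(j < n) g j ^_ (b j - k j + e j))%N%:R.
    by congr (_%:R); apply: eq_bigr => j _; rewrite !ffunE.
  rewrite -mulrA [_%:R * (_ * _)]mulrA -natrM -big_split /= -/(T k).
  have [->|T_neq0] := eqVneq (T k) 0%N; first by rewrite mulr0n !(mul0r, mulr0).
  suff -> : monD (monD a (monB c (kk k))) (monB g (monD (monB b (kk k)) e)) = E.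
    by rewrite !mulrA.
  apply/ffunP => j; rewrite /E !ffunE.
  have T_gt0 : (0 < T k)%N by rewrite lt0n.
  have := gt0_prodn T_gt0 j isT.
  by rewrite !muln_gt0 bin_gt0 !ffact_gt0 => /andP[/andP[le_kb le_kc] le_g]; lia.
rewrite -natr_sum /T sum_ffun_prod_bin_ffact // big_split natrM /dcoef -!mulrA.
by congr (_ * (_ * (_ * (_%:R * _)))); apply: eq_bigr => j _; rewrite !ffunE.
Qed.

Lemma ppair_wact_wmul w1 w2 p G :
  ppair (wact (wmul w1 w2) p) G = ppair (wact w1 (wact w2 p)) G.
Proof.
rewrite ppair_wact wpair_wmul [RHS]ppair_wact; apply: eq_bigr => x1 _.
under eq_bigr => x2 _ do rewrite wpair_ppair.
rewrite ppair_wact [in RHS]/wpair big_distrr /=; apply: eq_bigr => x2 _.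
rewrite /ppair !big_distrr /=; apply: eq_bigr => y _.
by rewrite wpair_mmul_act; ring.
Qed.

Lemma pcoef_sizej (q : Apoly) g j : pcoef q g != 0 -> (g j < sizej q j)%N.
Proof.
move=> qg_neq0; have : has (fun x : F * mon => x.2 == g) q.
  by apply/negPn/negP => no_g; move: qg_neq0; rewrite /pcoef big_hasC // eqxx.
case/hasP => x xq /eqP xg; rewrite /sizej -xg.
apply: (@leq_bigmax_seq _ _ (fun y : F * mon => pcoef q y.2 != 0) (fun y => (y.2 j).+1) x xq).
by rewrite xg.
Qed.

Lemma ppair_dcoef_high (q : Apoly) (b : mon) (K : mon -> F) : (exists j, sizej q j <= b j)%N ->
  ppair q (fun g => dcoef b g * K g) = 0.
Proof.
case=> j le_sb; apply: ppair_eq0 => g qg_neq0.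
rewrite /dcoef (bigD1 j) //= ffact_small ?mul0n ?mul0r //.
exact: leq_trans (pcoef_sizej j qg_neq0) le_sb.
Qed.

End Pairing.

Section Kernel.
Variables (F : numClosedFieldType) (n m : nat) (p : 'I_m -> Apoly F n).
Local Notation mon := (mon n).
Local Notation Apoly := (Apoly F n).
Local Notation weyl := (weyl F n).

Lemma sum_enum_eq (f : 'I_m -> F) i0 :
  \sum_(i <- enum 'I_m) (if i0 == i then f i else 0) = f i0.
Proof. by rewrite big_enum -big_mkcond (big_pred1 i0) // => i; rewrite eq_sym. Qed.

Lemma wpair_Phi q i G :
  wpair (Phi p q i) G = \sum_(k <- enum 'I_(Lp p))
     ppair (q k) (fun a => if (didx p k).1 == i then G a (didx p k).2 else 0).
Proof.
rewrite /Phi wpair_flatten_map; apply: eq_bigr => k _.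
rewrite wpair_wmul /Mentry /ppair; case: eqP => _; last first.
  by rewrite !big1 // => x _; rewrite ?mulr0 ?big_nil.
rewrite /polyW big_map; apply: eq_bigr => y _.
by rewrite /dmon big_seq1 wpair_mmul_nocross /=; [rewrite mulr1 monD0 mon0D | right].
Qed.

Lemma kappa_Phi q :
  peq (kappa p (Phi p q)) (flatten [seq pmul (q k) (Der p k) | k <- enum 'I_(Lp p)]).
Proof.
move=> b; rewrite !pcoefE /kappa !ppair_flatten_map.
under eq_bigr => i _ do rewrite ppair_wact wpair_Phi.
rewrite exchange_big /=; apply: eq_bigr => k _.
rewrite ppair_pmul -ppair_sumr; apply: eq_ppair => a.
by rewrite sum_enum_eq /Der ppair_dmon.
Qed.

Lemma Syz_in_ker q : Syz p q <-> in_ker p (Phi p q).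
Proof. by split=> Sq b; [rewrite kappa_Phi | rewrite -kappa_Phi]; apply: Sq. Qed.

Lemma ppair_kappa_weq a a' G : (forall i, weq (a i) (a' i)) ->
  ppair (kappa p a) G = ppair (kappa p a') G.
Proof.
move=> eaa'; rewrite /kappa !ppair_flatten_map; apply: eq_bigr => i _.
by rewrite !ppair_wact (wpair_weq _ (eaa' i)).
Qed.

Lemma ppair_kappa_flatten (I : Type) (s : seq I) (f : I -> 'I_m -> weyl) G :
  ppair (kappa p (fun i => flatten [seq f j i | j <- s])) G =
  \sum_(j <- s) ppair (kappa p (f j)) G.
Proof.
rewrite /kappa ppair_flatten_map.
under eq_bigr => i _ do rewrite ppair_wact wpair_flatten_map.
rewrite exchange_big /=; apply: eq_bigr => j _; rewrite ppair_flatten_map.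
by apply: eq_bigr => i _; rewrite ppair_wact.
Qed.

Lemma ppair_kappa_wmul w a G :
  ppair (kappa p (fun i => wmul w (a i))) G = ppair (wact w (kappa p a)) G.
Proof.
rewrite /kappa ppair_flatten_map ppair_wact.
under eq_bigr => i _ do rewrite ppair_wact_wmul ppair_wact.
by rewrite -wpair_sumr; apply: eq_wpair => al be; rewrite ppair_flatten_map.
Qed.

Lemma in_ker_ppair a G : in_ker p a -> ppair (kappa p a) G = 0.
Proof. by move=> ker_a; apply: ppair_eq0 => b; rewrite ker_a eqxx. Qed.

Lemma in_gen_image_ker a : in_gen_image p a -> in_ker p a.
Proof.
case=> r [w [qs [Sqs ea]]] b.
rewrite pcoefE (ppair_kappa_weq _ ea).
rewrite (ppair_kappa_flatten _ (fun j i => wmul (w j) (Phi p (qs j) i))) big1 // => j _.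
rewrite ppair_kappa_wmul ppair_wact /wpair big1 // => x _.
by rewrite in_ker_ppair ?mulr0 //; apply/Syz_in_ker.
Qed.

Lemma in_gen_image_seq (I : eqType) (s : seq I) (w : I -> weyl)
    (q : I -> 'I_(Lp p) -> Apoly) a :
  (forall t, t \in s -> Syz p (q t)) ->
  (forall i G, wpair (a i) G = \sum_(t <- s) wpair (wmul (w t) (Phi p (q t) i)) G) ->
  in_gen_image p a.
Proof.
move=> Sq ea; pose s_ := tnth (in_tuple s).
exists (size s), (fun j => w (s_ j)), (fun j => q (s_ j)); split.
  by move=> j; apply: Sq; apply: mem_tnth.
by move=> i; apply: weq_wpair => G; rewrite ea wpair_flatten_map big_tnth big_enum.
Qed.

Lemma mem_Didx i (c : mon) : (forall j, c j <= sizej (p i) j)%N -> (i, c) \in Didx p.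
Proof.
move=> le_c; apply/flatten_mapP; exists i; first by rewrite mem_enum.
rewrite inE; apply/orP; right; apply/mapP; exists c => //.
rewrite /Eset; set S := (\max_(j < n) sizej (p i) j)%N.
have lt_cS j : (c j < S.+1)%N by rewrite ltnS (leq_trans (le_c j)) // (leq_bigmax j).
have -> : c = kk [ffun j => (inord (c j) : 'I_S.+1)].
  by apply/ffunP => j; rewrite !ffunE inordK.
apply: map_f; rewrite mem_filter mem_enum andbT; apply/forallP => j.
by rewrite ffunE inordK.
Qed.

Lemma sum_index_Didx v (h : 'I_m * mon -> F) : v \in Didx p ->
  \sum_(k <- enum 'I_(Lp p))
     (if nat_of_ord k == index v (Didx p) then h (didx p k) else 0) = h v.
Proof.
move=> v_D; rewrite big_enum -big_mkcond /=.
have lt_vL : (index v (Didx p) < Lp p)%N by rewrite /Lp index_mem.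
rewrite (big_pred1 (Ordinal lt_vL)) //= /didx (tnth_nth v) /=.
by rewrite nth_index.
Qed.

Definition exp_le_deg (i : 'I_m) (b : mon) : bool := [forall j, b j < sizej (p i) j]%N.

Lemma exp_le_degPn i (b : mon) :
  reflect (exists j, sizej (p i) j <= b j)%N (~~ exp_le_deg i b).
Proof.
rewrite negb_forall; apply: (iffP existsP) => -[j hj]; exists j.
  by rewrite leqNgt.
by rewrite -leqNgt.
Qed.

(* Once b_j > deg_j p_i, the exponent (deg_j p_i + 1) e_j lies in E_{p_i},
   is below b, and its derivative kills p_i. *)
Definition killing_exp (i : 'I_m) (b : mon) : mon :=
  if [pick j | sizej (p i) j <= b j]%N is Some j
  then [ffun j' => if j' == j then sizej (p i) j else 0%N] else mon0 n.

Lemma killing_exp_le_size i (b : mon) j : (killing_exp i b j <= sizej (p i) j)%N.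
Proof.
by rewrite /killing_exp; case: pickP => [j0 _|_]; rewrite ffunE //; case: eqP => [->|].
Qed.

Lemma killing_exp_le i (b : mon) j : (killing_exp i b j <= b j)%N.
Proof.
by rewrite /killing_exp; case: pickP => [j0 le_b|_]; rewrite ffunE //; case: eqP => [->|].
Qed.

Lemma killing_exp_kills i (b : mon) : ~~ exp_le_deg i b ->
  exists j, (sizej (p i) j <= killing_exp i b j)%N.
Proof.
move=> /exp_le_degPn[j0 le_b0]; rewrite /killing_exp; case: pickP => [j _|no_j].
  by exists j; rewrite ffunE eqxx.
by move: (no_j j0); rewrite le_b0.
Qed.

Definition syz_unit (i : 'I_m) (b : mon) (k : 'I_(Lp p)) : Apoly :=
  if nat_of_ord k == index (i, killing_exp i b) (Didx p) then [:: (1, mon0 n)] else [::].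

Lemma Phi_syz_unit i (b : mon) i' :
  weq (Phi p (syz_unit i b) i') (if i == i' then dmon F (killing_exp i b) else [::]).
Proof.
apply: weq_wpair => G; rewrite wpair_Phi.
pose h (v : 'I_m * mon) := if v.1 == i' then G (mon0 n) v.2 else 0.
rewrite (eq_bigr (fun k => if nat_of_ord k == index (i, killing_exp i b) (Didx p)
   then h (didx p k) else 0)); last first.
  by move=> k _; rewrite /syz_unit /ppair; case: eqP => _; rewrite ?big_seq1 ?mul1r ?big_nil.
rewrite sum_index_Didx /h /=; last by apply: mem_Didx => j; apply: killing_exp_le_size.
by rewrite /wpair; case: eqP => _; rewrite ?big_seq1 ?mul1r ?big_nil.
Qed.

Lemma Syz_unit i (b : mon) : ~~ exp_le_deg i b -> Syz p (syz_unit i b).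
Proof.
move=> high; apply/Syz_in_ker => c; rewrite pcoefE.
rewrite (ppair_kappa_weq _ (Phi_syz_unit i b)) /kappa ppair_flatten_map.
rewrite (eq_bigr (fun i' => if i == i' then
   ppair (wact (dmon F (killing_exp i b)) (p i')) (fun g => (g == c)%:R) else 0)); last first.
  by move=> i' _; case: eqP => _; rewrite // /ppair big_nil.
by rewrite sum_enum_eq ppair_dmon ppair_dcoef_high //; apply: killing_exp_kills.
Qed.

Definition high_factor (i : 'I_m) (x : F * mon * mon) : weyl :=
  [:: (x.1.1, x.1.2, monB x.2 (killing_exp i x.2))].

Lemma wpair_high_factor_Phi i x i' G :
  wpair (wmul (high_factor i x) (Phi p (syz_unit i x.2) i')) G =
  if i == i' then x.1.1 * G x.1.2 x.2 else 0.
Proof.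
rewrite (wpair_wmul_weqr _ _ (Phi_syz_unit i x.2 i')) wpair_wmul big_seq1.
case: eqP => _; last by rewrite big_nil.
rewrite /dmon big_seq1 wpair_mmul_nocross /=; last by right.
by rewrite mulr1 monD0 monBK // => j; apply: killing_exp_le.
Qed.

Section Generators.
Variable a : 'I_m -> weyl.

(* Entry (i, b) collects the coefficients c t^a of the terms c t^a d^b e_i
   of [a] with b below the degrees of p_i. *)
Definition syz_low (k : 'I_(Lp p)) : Apoly :=
  [seq (x.1.1, x.1.2) | i <- enum 'I_m,
     x <- [seq x <- a i | exp_le_deg i x.2 && (nat_of_ord k == index (i, x.2) (Didx p))]].

Lemma ppair_syz_low (H : 'I_m -> mon -> mon -> F) :
  \sum_(k <- enum 'I_(Lp p)) ppair (syz_low k) (fun al => H (didx p k).1 al (didx p k).2) =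
  \sum_(i <- enum 'I_m) \sum_(x <- a i | exp_le_deg i x.2) x.1.1 * H i x.1.2 x.2.
Proof.
under eq_bigr => k _ do rewrite /ppair big_allpairs_dep /=.
rewrite exchange_big /=; apply: eq_bigr => i _.
under eq_bigr => k _ do rewrite big_filter big_mkcond /=.
rewrite exchange_big [RHS]big_mkcond /=; apply: eq_bigr => x _.
case: (boolP (exp_le_deg i x.2)) => /= [low|_]; last by rewrite big1.
have x_D : (i, x.2) \in Didx p.
  by apply: mem_Didx => j; apply: ltnW; apply: (forallP low).
exact: (sum_index_Didx (fun v => x.1.1 * H v.1 x.1.2 v.2) x_D).
Qed.

Lemma Phi_syz_low i : weq (Phi p syz_low i) [seq x <- a i | exp_le_deg i x.2].
Proof.
apply: weq_wpair => G; rewrite wpair_Phi.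
rewrite (ppair_syz_low (fun i' al be => if i' == i then G al be else 0)) /wpair [RHS]big_filter.
rewrite (eq_bigr (fun i' => if i == i' then
   \sum_(x <- a i' | exp_le_deg i' x.2) x.1.1 * G x.1.2 x.2 else 0)); last first.
  by move=> i' _; rewrite eq_sym; case: eqP => _ //; rewrite big1 // => x _; rewrite mulr0.
by rewrite sum_enum_eq.
Qed.

Lemma ppair_kappa_low G :
  ppair (kappa p (fun i => [seq x <- a i | exp_le_deg i x.2])) G = ppair (kappa p a) G.
Proof.
rewrite /kappa !ppair_flatten_map; apply: eq_bigr => i _.
rewrite !ppair_wact -(wpair_filterC (a i) (fun x => exp_le_deg i x.2)).
rewrite [X in _ = _ + X]/wpair big_filter big1 ?addr0 // => x /exp_le_degPn high.
by rewrite ppair_dcoef_high ?mulr0.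
Qed.

Lemma Syz_low : in_ker p a -> Syz p syz_low.
Proof.
move=> ker_a; apply/Syz_in_ker => b.
by rewrite pcoefE (ppair_kappa_weq _ Phi_syz_low) ppair_kappa_low -pcoefE.
Qed.

Lemma ker_in_gen_image : in_ker p a -> in_gen_image p a.
Proof.
move=> ker_a.
pose s := None :: [seq Some (i, x) | i <- enum 'I_m, x <- [seq x <- a i | ~~ exp_le_deg i x.2]].
pose w t := if t is Some (i, x) then high_factor i x else [:: (1, mon0 n, mon0 n)].
pose q (t : option ('I_m * (F * mon * mon))) :=
  if t is Some (i, x) then syz_unit i x.2 else syz_low.
apply: (@in_gen_image_seq _ s w q) => [[[i x]|] | i G] /=.
- move=> /[!inE] /allpairsPdep[i' [x' [_ x'_high [-> ->]]]].
  by apply: Syz_unit; move: x'_high; rewrite mem_filter => /andP[].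
- by move=> _; apply: Syz_low.
rewrite big_cons /= wpair_wmul1l (wpair_weq _ (Phi_syz_low i)) big_allpairs_dep /=.
under eq_bigr => i' _ do under eq_bigr => x _ do rewrite wpair_high_factor_Phi.
rewrite (eq_bigr (fun i' => if i == i' then
   \sum_(x <- [seq x <- a i' | ~~ exp_le_deg i' x.2]) x.1.1 * G x.1.2 x.2 else 0)).
  by rewrite sum_enum_eq wpair_filterC.
by move=> i' _; rewrite eq_sym; case: eqP => _ //; rewrite big1.
Qed.

End Generators.
End Kernel.

Theorem lemma5p1 (F : numClosedFieldType) (n m : nat) (p : 'I_m -> Apoly F n) :
  (forall q, Syz p q -> in_ker p (Phi p q)) /\
  (forall a : 'I_m -> weyl F n, in_ker p a <-> in_gen_image p a).
Proof.
split=> [q /Syz_in_ker // | a].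
by split; [apply: ker_in_gen_image | apply: in_gen_image_ker].
Qed.
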